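(* For every integer $n\ge 0$, \[ (x+1)\sum_{k=0}^{n}\binom{n}{k}\,{}_{H}w_{n-k}(x)\,w_{k}(x)={}_{H}w_{n+1}(x)+{}_{H}w_{n}(x)-w_{n+1}(x). \]
   Context: $\genfrac{\{}{\}}{0pt}{}{n}{k}$ denotes the Stirling numbers of the second kind. The geometric polynomials are $w_n(x)=\sum_{k=0}^{n}\genfrac{\{}{\}}{0pt}{}{n}{k}k!\,x^k$ (so $w_0=1$). With $H_k=\sum_{i=1}^k 1/i$, the harmonic geometric polynomials are ${}_{H}w_n(x)=\sum_{k=1}^{n}\genfrac{\{}{\}}{0pt}{}{n}{k}k!\,H_k\,x^k$ (so ${}_Hw_0=0$). *)

From mathcomp Require Import all_boot all_order all_algebra.
Set Implicit Arguments. Unset Strict Implicit. Unset Printing Implicit Defensive.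
Import Order.TTheory GRing.Theory Num.Theory.
Local Open Scope ring_scope.

Fixpoint stirling2 (n k : nat) : nat :=
  match n, k with
  | 0, 0 => 1
  | 0, _.+1 => 0
  | _.+1, 0 => 0
  | n'.+1, k'.+1 => (k'.+1 * stirling2 n' k'.+1 + stirling2 n' k')%N
  end.

Definition harmonic (R : fieldType) (k : nat) : R :=
  \sum_(1 <= i < k.+1) (i%:R)^-1.

Definition geom_poly (R : fieldType) (n : nat) (x : R) : R :=
  \sum_(0 <= k < n.+1) ((stirling2 n k * k`!)%:R * x ^+ k).

Definition harm_geom_poly (R : fieldType) (n : nat) (x : R) : R :=
  \sum_(1 <= k < n.+1) ((stirling2 n k * k`!)%:R * harmonic R k * x ^+ k).
Arguments harmonic R k : clear implicits.
Arguments geom_poly R n x : clear implicits.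
Arguments harm_geom_poly R n x : clear implicits.

(* Let D be the derivation (t + x) d/dt on R[t].  Since the coefficients of
   D c satisfy (D c)_m = m c_m + x (m+1) c_(m+1), the recurrence of the
   surjection numbers S(n,m) m! gives (D^n c)(0) = sum_m S(n,m) m! c_m x^m,
   which depends only on c_0, ..., c_n.  Hence w_n(x) and Hw_n(x) are the
   values at 0 of D^n applied to truncations of sum_m t^m and sum_m H_m t^m,
   and the Leibniz rule for D^n turns the left-hand sum into (D^n f)(0) with
   f_m = sum_(p <= m) H_p = (m+1) H_m - m.  On the right, one more application
   of D to sum_m (H_m - 1) t^m, using (m+1) (H_(m+1) - 1) = (m+1) H_m - m,
   produces (1 + x) f as well. *)

From mathcomp Require Import all_boot all_order all_algebra.
From mathcomp Require Import ring.
Import GRing.Theory Num.Theory.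

Set Implicit Arguments.
Unset Strict Implicit.
Unset Printing Implicit Defensive.

Definition nsurj (n m : nat) : nat := stirling2 n m * m`!.

Lemma stirling2_small n m : n < m -> stirling2 n m = 0.
Proof.
elim: n m => [|n IHn] [|m] //= ltnm.
by rewrite !IHn ?muln0 // ltnW.
Qed.

Lemma nsurj_small n m : n < m -> nsurj n m = 0.
Proof. by move=> ltnm; rewrite /nsurj stirling2_small. Qed.

Lemma nsurjS n m : nsurj n.+1 m = m * (nsurj n m + nsurj n m.-1).
Proof. by case: m => [|m]; rewrite /nsurj //= factS; ring. Qed.

Local Open Scope ring_scope.

Section Leibniz.

Variables (A : pzSemiRingType) (D : A -> A).
Hypotheses (D0 : D 0 = 0) (DD : {morph D : u v / u + v}).
Hypothesis DM : forall u v, D (u * v) = D u * v + u * D v.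

Lemma iter_derivationM n u v :
  iter n D (u * v) = \sum_(k < n.+1) (iter (n - k) D u * iter k D v) *+ 'C(n, k).
Proof.
have DMn w i : D (w *+ i) = D w *+ i.
  by elim: i => [|i IHi]; rewrite ?D0 // !mulrS DD IHi.
elim: n => [|n IHn]; first by rewrite big_ord1.
rewrite iterS IHn (big_morph D DD D0).
under eq_bigr => k _ do rewrite DMn DM mulrnDl.
rewrite big_split /= [RHS]big_ord_recl.
under [in RHS]eq_bigr => k _ do rewrite binS mulrnDr.
rewrite big_split /= addrA; congr (_ + _).
rewrite big_ord_recl [X in _ = _ + X]big_ord_recr /= subn0 !bin0.
rewrite (bin_small (ltnSn n)) mulr0n addr0; congr (_ + _).
by apply: eq_bigr => k _; rewrite /bump leq0n add1n subSS -(subnSK (ltn_ord k)).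
Qed.

End Leibniz.

Section GeometricTransform.

Variables (R : comNzRingType) (x : R).

Definition geom_transform (n : nat) (c : nat -> R) : R :=
  \sum_(0 <= m < n.+1) (nsurj n m)%:R * c m * x ^+ m.

Lemma geom_transformS n c :
  geom_transform n.+1 c = geom_transform n (fun m => c m *+ m + x * c m.+1 *+ m.+1).
Proof.
rewrite /geom_transform.
under eq_bigr => m _ do rewrite nsurjS natrM natrD mulrDr !mulrDl.
rewrite big_split /= [X in X + _]big_nat_recr //= nsurj_small // !mulr0 !mul0r addr0.
rewrite [X in _ + X]big_nat_recl //= !mul0r add0r -big_split /=.
by apply: eq_bigr => m _; rewrite exprS; ring.
Qed.

Lemma geom_transformB n c d :
  geom_transform n c - geom_transform n d = geom_transform n (fun m => c m - d m).
Proof. by rewrite -sumrB; apply: eq_bigr => m _; rewrite mulrBr mulrBl. Qed.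

Definition euler_shift (p : {poly R}) : {poly R} := ('X + x%:P) * p^`().

Lemma euler_shiftM p q :
  euler_shift (p * q) = euler_shift p * q + p * euler_shift q.
Proof. by rewrite /euler_shift derivM; ring. Qed.

Lemma coef_euler_shift p m :
  (euler_shift p)`_m = p`_m *+ m + x * p`_m.+1 *+ m.+1.
Proof.
rewrite /euler_shift mulrDl coefD coefXM coefCM !coef_deriv.
by rewrite mulrnAr; case: m => [|m]; rewrite ?mulr0n.
Qed.

Lemma coef0_iter_euler_shift n p :
  (iter n euler_shift p)`_0 = geom_transform n (fun m => p`_m).
Proof.
elim: n p => [|n IHn] p.
  by rewrite /geom_transform big_nat1 mulr1 mul1r.
rewrite iterSr IHn geom_transformS.
by apply: eq_bigr => m _; rewrite coef_euler_shift.
Qed.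

(* The [%N] matters: [p] is an ordinal, and [m - p] would otherwise be
   computed in the ring ['I_m.+1]. *)
Lemma geom_transform_convolution (c d : nat -> R) n :
  \sum_(0 <= k < n.+1) 'C(n, k)%:R * geom_transform (n - k) c * geom_transform k d
  = geom_transform n (fun m => \sum_(p < m.+1) c p * d (m - p)%N).
Proof.
have trunc_coef (e : nat -> R) k : (k <= n)%N ->
    geom_transform k e = (iter k euler_shift (\poly_(i < n.+1) e i))`_0.
  move=> le_kn; rewrite coef0_iter_euler_shift.
  by apply: eq_big_nat => m /andP[_ le_mk]; rewrite coef_poly (leq_trans le_mk).
have euler_shift0 : euler_shift 0 = 0 by rewrite /euler_shift deriv0 mulr0.
have euler_shiftD : {morph euler_shift : p q / p + q}.
  by move=> p q; rewrite /euler_shift derivD mulrDr.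
pose P := \poly_(i < n.+1) c i; pose Q := \poly_(i < n.+1) d i.
transitivity ((iter n euler_shift (P * Q))`_0).
  rewrite (iter_derivationM euler_shift0 euler_shiftD euler_shiftM).
  rewrite coef_sum big_mkord; apply: eq_bigr => k _.
  by rewrite coefMn coef0M mulr_natl mulrnAl -!trunc_coef // ?leq_subr // -ltnS.
rewrite coef0_iter_euler_shift; apply: eq_big_nat => m /andP[_ le_mn].
rewrite coefM; congr (_ * _ * _); apply: eq_bigr => p _.
by rewrite !coef_poly (leq_trans (ltn_ord p) le_mn) (leq_ltn_trans (leq_subr p m) le_mn).
Qed.

End GeometricTransform.

Lemma geom_poly_transform (R : fieldType) n x :
  geom_poly R n x = geom_transform x n (fun=> 1).
Proof. by apply: eq_bigr => m _; rewrite mulr1. Qed.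

Lemma harm_geom_poly_transform (R : fieldType) n x :
  harm_geom_poly R n x = geom_transform x n (harmonic R).
Proof.
by rewrite /geom_transform big_ltn // [harmonic R 0]big_geq // mulr0 mul0r add0r.
Qed.

Lemma harmonicS (R : fieldType) m : harmonic R m.+1 = harmonic R m + m.+1%:R^-1.
Proof. by rewrite /harmonic big_nat_recr. Qed.

Lemma harmonicS_mulrn (R : numFieldType) m :
  harmonic R m.+1 *+ m.+1 = harmonic R m *+ m.+1 + 1.
Proof. by rewrite harmonicS mulrnDl -[_^-1 *+ _]mulr_natr mulVf ?pnatr_eq0. Qed.

Lemma sum_harmonic (R : numFieldType) m :
  \sum_(p < m.+1) harmonic R p = harmonic R m *+ m.+1 - m%:R.
Proof.
elim: m => [|m IHm]; first by rewrite big_ord1 [harmonic R 0]big_geq // mul0rn subr0.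
by rewrite big_ord_recr /= IHm [harmonic R m.+1 *+ _]mulrS harmonicS_mulrn -natr1; ring.
Qed.

Theorem lemma1 (R : numFieldType) (x : R) (n : nat) :
  (x + 1) * \sum_(0 <= k < n.+1)
      ('C(n, k)%:R * harm_geom_poly R (n - k) x * geom_poly R k x)
  = harm_geom_poly R n.+1 x + harm_geom_poly R n x - geom_poly R n.+1 x.
Proof.
under eq_bigr do rewrite harm_geom_poly_transform geom_poly_transform.
rewrite geom_transform_convolution !harm_geom_poly_transform geom_poly_transform.
rewrite addrAC geom_transformB geom_transformS.
rewrite /geom_transform mulr_sumr -big_split /=; apply: eq_bigr => m _.
under eq_bigr do rewrite mulr1.
by rewrite sum_harmonic -mulrnAr !mulrnBl harmonicS_mulrn; ring.
Qed.
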